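(* Let $\Gamma$ be a reduct of $\mathbb{P}$ in which $<$ and $\bot$ are primitive positive definable. Let $f\in{\rm Pol}(\Gamma)$ be a binary polymorphism which is canonical as a function from $(P;\leq,\prec)^2$ to $(P;\leq)$. Then at least one of the following holds: $f$ is dominated; ${\rm Pol}(\Gamma)$ contains $e_<$; ${\rm Pol}(\Gamma)$ contains $e_\leq$.
   Context: $\mathbb{P}=(P;\leq)$ is the random partial order (Fraïssé limit of all finite partial orders); $x<y$ means $x\leq y\wedge x\ne y$, $x\bot y$ means $x,y$ incomparable. A reduct of $\mathbb{P}$ is a structure on $P$ with relations first-order definable in $\mathbb{P}$; primitive positive definable means definable by $\exists\bar y$ (conjunction of atomic formulas). ${\rm Pol}(\Gamma)$ is the set of all finitary operations on $P$ preserving all relations of $\Gamma$ (componentwise). $(P;\leq,\prec)$ denotes the Fraïssé limit of the class of finite structures $(A;\leq,\prec)$ where $\leq$ is a partial order and $\prec$ a linear order extending $<$; its $\leq$-reduct is identified with $\mathbb{P}$. A binary $f:P^2\to P$ is canonical from $(P;\leq,\prec)^2$ to $(P;\leq)$ if for every $s\geq1$, all $\alpha_1,\alpha_2\in{\rm Aut}(P;\leq,\prec)$ and all $d_1,d_2\in P^s$ there is $\beta\in{\rm Aut}(P;\leq)$ with $f(\alpha_1(d_1),\alpha_2(d_2))=\beta(f(d_1,d_2))$ (all maps applied componentwise). $f$ is dominated on the first argument if $f(x,y)<f(x',y')$ whenever $x<x'$ and $f(x,y)\bot f(x',y')$ whenever $x\bot x'$ (for all $y,y'$); $f$ is dominated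 if $f$ or $(x,y)\mapsto f(y,x)$ is dominated on the first argument. $e_<:P^2\to P$ is a fixed embedding of $(P;<)^2$ into $(P;<)$, i.e. an injective map with $e_<(a,b)<e_<(a',b')\iff(a<a'\wedge b<b')$; $e_\leq:P^2\to P$ is a fixed embedding of $(P;\leq)^2$ into $(P;\leq)$, i.e. injective with $e_\leq(a,b)\leq e_\leq(a',b')\iff(a\leq a'\wedge b\leq b')$. *)

From mathcomp Require Import all_boot.
Set Implicit Arguments. Unset Strict Implicit. Unset Printing Implicit Defensive.

Section Defs.
Variable P : Type.

Definition partial_order (le : P -> P -> Prop) :=
  (forall x, le x x) /\ (forall x y, le x y -> le y x -> x = y) /\
  (forall x y z, le x y -> le y z -> le x z).

Definition strict (le : P -> P -> Prop) x y := le x y /\ x <> y.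
Definition incomp (le : P -> P -> Prop) x y := ~ le x y /\ ~ le y x.

Definition countable := exists g : P -> nat, injective g.

Definition is_aut1 (le : P -> P -> Prop) (a : P -> P) :=
  bijective a /\ forall x y, le x y <-> le (a x) (a y).
Definition is_aut2 (le prec : P -> P -> Prop) (a : P -> P) :=
  bijective a /\ (forall x y, le x y <-> le (a x) (a y))
              /\ (forall x y, prec x y <-> prec (a x) (a y)).

(** (P;le) is the Fraisse limit of the class of finite partial orders:
    countable, homogeneous, and with age = all finite partial orders. *)
Definition random_poset (le : P -> P -> Prop) :=
  partial_order le /\ countable /\
  (forall (n : nat) (a b : 'I_n -> P), injective a -> injective b ->
     (forall i j, le (a i) (a j) <-> le (b i) (b j)) ->
     exists al, is_aut1 le al /\ forall i, al (a i) = b i) /\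
  (forall (n : nat) (r : 'I_n -> 'I_n -> Prop),
     (forall i, r i i) -> (forall i j, r i j -> r j i -> i = j) ->
     (forall i j k, r i j -> r j k -> r i k) ->
     exists a : 'I_n -> P, injective a /\ forall i j, r i j <-> le (a i) (a j)).

(** (P;le,prec) is the Fraisse limit of the class of finite structures (A;≤,≺)
    with ≤ a partial order and ≺ a (strict) linear order extending <. *)
Definition random_poset_linext (le prec : P -> P -> Prop) :=
  partial_order le /\
  (forall x, ~ prec x x) /\ (forall x y z, prec x y -> prec y z -> prec x z) /\
  (forall x y, x <> y -> prec x y \/ prec y x) /\
  (forall x y, strict le x y -> prec x y) /\
  countable /\
  (forall (n : nat) (a b : 'I_n -> P), injective a -> injective b ->
     (forall i j, le (a i) (a j) <-> le (b i) (b j)) ->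
     (forall i j, prec (a i) (a j) <-> prec (b i) (b j)) ->
     exists al, is_aut2 le prec al /\ forall i, al (a i) = b i) /\
  (forall (n : nat) (r q : 'I_n -> 'I_n -> Prop),
     (forall i, r i i) -> (forall i j, r i j -> r j i -> i = j) ->
     (forall i j k, r i j -> r j k -> r i k) ->
     (forall i, ~ q i i) -> (forall i j k, q i j -> q j k -> q i k) ->
     (forall i j, i <> j -> q i j \/ q j i) ->
     (forall i j, r i j -> i <> j -> q i j) ->
     exists a : 'I_n -> P, injective a /\
       (forall i j, r i j <-> le (a i) (a j)) /\ (forall i j, q i j <-> prec (a i) (a j))).

Inductive fo : Type :=
| FLe : nat -> nat -> fo
| FEq : nat -> nat -> fo
| FNot : fo -> fo
| FAnd : fo -> fo -> fo
| FEx : nat -> fo -> fo.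

Definition upd (env : nat -> P) (i : nat) (x : P) : nat -> P :=
  fun j => if j == i then x else env j.

Fixpoint sat (le : P -> P -> Prop) (env : nat -> P) (phi : fo) : Prop :=
  match phi with
  | FLe i j => le (env i) (env j)
  | FEq i j => env i = env j
  | FNot p => ~ sat le env p
  | FAnd p q => sat le env p /\ sat le env q
  | FEx i p => exists x, sat le (upd env i x) p
  end.

Definition fo_definable (le : P -> P -> Prop) (k : nat) (S : ('I_k -> P) -> Prop) :=
  exists phi : fo, forall env : nat -> P,
    S (fun j : 'I_k => env (nat_of_ord j)) <-> sat le env phi.

(** A structure Gamma on P: relations R i of arity ar i, i ranging over I. *)
Section Gamma.
Variables (I : Type) (ar : I -> nat) (R : forall i : I, ('I_(ar i) -> P) -> Prop).

Inductive ppatom : Type :=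
| PEq : nat -> nat -> ppatom
| PRel : forall i : I, ('I_(ar i) -> nat) -> ppatom.

Definition ppholds (env : nat -> P) (a : ppatom) : Prop :=
  match a with
  | PEq x y => env x = env y
  | PRel i v => R (fun l => env (v l))
  end.

Definition pp_definable (k : nat) (S : ('I_k -> P) -> Prop) :=
  exists (m : nat) (atoms : 'I_m -> ppatom), forall t : 'I_k -> P,
    S t <-> exists env : nat -> P,
      (forall j : 'I_k, env (nat_of_ord j) = t j) /\ forall a, ppholds env (atoms a).

Definition pol2 (f : P -> P -> P) :=
  forall (i : I) (t1 t2 : 'I_(ar i) -> P), R t1 -> R t2 -> R (fun l => f (t1 l) (t2 l)).
End Gamma.

Definition binrel (r : P -> P -> Prop) : ('I_2 -> P) -> Prop :=
  fun t => r (t ord0) (t (@ord_max 1)).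

Definition canonical2 (le prec : P -> P -> Prop) (f : P -> P -> P) :=
  forall (s : nat), 0 < s -> forall (a1 a2 : P -> P), is_aut2 le prec a1 -> is_aut2 le prec a2 ->
  forall d1 d2 : 'I_s -> P, exists b, is_aut1 le b /\
    forall l : 'I_s, f (a1 (d1 l)) (a2 (d2 l)) = b (f (d1 l) (d2 l)).

Definition dominated_first (le : P -> P -> Prop) (f : P -> P -> P) :=
  forall x y x' y',
    (strict le x x' -> strict le (f x y) (f x' y')) /\
    (incomp le x x' -> incomp le (f x y) (f x' y')).

Definition dominated (le : P -> P -> Prop) (f : P -> P -> P) :=
  dominated_first le f \/ dominated_first le (fun x y => f y x).

Definition emb_lt (le : P -> P -> Prop) (e : P -> P -> P) :=
  (forall a b a' b', e a b = e a' b' -> a = a' /\ b = b') /\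
  forall a b a' b', strict le (e a b) (e a' b') <-> (strict le a a' /\ strict le b b').
Definition emb_le (le : P -> P -> Prop) (e : P -> P -> P) :=
  (forall a b a' b', e a b = e a' b' -> a = a' /\ b = b') /\
  forall a b a' b', le (e a b) (e a' b') <-> (le a a' /\ le b b').

End Defs.

From Stdlib Require Import Classical ClassicalEpsilon FunctionalExtensionality PropExtensionality.
From HB Require Import structures.
From mathcomp Require Import all_boot.
Set Implicit Arguments. Unset Strict Implicit. Unset Printing Implicit Defensive.

(* By canonicity, the orbit in (P; ≤) of (f x y, f x' y') depends only on the types of (x, x') and
   (y, y') in (P; ≤, ≺), so f is described by a finite table.  Preservation of < and ⊥ fixes some
   entries and the symmetry under reversal of pairs halves the others, leaving nine.  Transitivity
   of ≤ among the f-images of three points of P², checked exhaustively on a list of three-point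
   configurations, excludes all these tables except four shapes.  Two of them say that f is
   dominated.  In the other two, f is composed with itself, the projections and automorphisms
   so as to realize on every finite set of pairs the order that e_< (or e_≤) induces there; by
   homogeneity and since Γ is invariant under automorphisms, e_< (or e_≤) is then a
   polymorphism. *)

(** * Tuples with repetitions *)

Lemma tuple_injective_factor (T : Type) n (z : 'I_n -> T) :
  exists m (w : 'I_m -> T) (s : 'I_n -> 'I_m),
    [/\ injective w, forall i, z i = w (s i) & forall mu, exists i, s i = mu].
Proof.
elim: n z => [|n IH] z.
  by exists 0, z, id; split=> [[]|//|mu]; last exists mu.
case: (classic (injective z)) => [zI|zNI].
  by exists n.+1, z, id; split=> // mu; exists mu.
have [i [j [zij nij]]] : exists i j, z i = z j /\ i <> j.
  apply: NNPP => H; apply: zNI => i j zij; apply: NNPP => nij; apply: H; by exists i, j.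
have [i' ii'] : exists i', i = lift j i'.
  by case: (unliftP j i) => [i' ->|eij]; [exists i' | case: nij].
have [m [w [s [wI zs sS]]]] := IH (fun k => z (lift j k)).
exists m, w, (fun k => if unlift j k is Some k' then s k' else s i'); split=> //.
  by move=> k; case: (unliftP j k) => [k' ->|->]; [exact: zs | rewrite -zij ii' zs].
by move=> mu; have [k <-] := sS mu; exists (lift j k); rewrite liftK.
Qed.

Lemma tuple_pair_factor (T : Type) n (a b : 'I_n -> T) :
  (forall i j, a i = a j <-> b i = b j) ->
  exists m (a' b' : 'I_m -> T) (s : 'I_n -> 'I_m),
    [/\ injective a', injective b', forall i, a i = a' (s i) /\ b i = b' (s i)
      & forall mu, exists i, s i = mu].
Proof.
move=> ab.
have [m [w [s [wI zs sS]]]] := tuple_injective_factor (fun i => (a i, b i)).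
have wE i : w (s i) = (a i, b i) by rewrite -zs.
exists m, (fun mu => (w mu).1), (fun mu => (w mu).2), s; split=> [mu nu|mu nu|i|//].
- have [i <-] := sS mu; have [j <-] := sS nu; rewrite !wE /= => aij.
  by apply: wI; rewrite !wE -(proj1 (ab i j) aij) aij.
- have [i <-] := sS mu; have [j <-] := sS nu; rewrite !wE /= => bij.
  by apply: wI; rewrite !wE (proj2 (ab i j) bij) bij.
- by rewrite wE.
Qed.

Lemma homogeneity_noninjective (T : Type) (Q : (T -> T) -> Prop) (r1 r2 : T -> T -> Prop) :
  (forall n (a b : 'I_n -> T), injective a -> injective b ->
     (forall i j, r1 (a i) (a j) <-> r1 (b i) (b j)) ->
     (forall i j, r2 (a i) (a j) <-> r2 (b i) (b j)) ->
     exists g, Q g /\ forall i, g (a i) = b i) ->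
  forall n (a b : 'I_n -> T), (forall i j, a i = a j <-> b i = b j) ->
     (forall i j, r1 (a i) (a j) <-> r1 (b i) (b j)) ->
     (forall i j, r2 (a i) (a j) <-> r2 (b i) (b j)) ->
     exists g, Q g /\ forall i, g (a i) = b i.
Proof.
move=> hom n a b ab r1ab r2ab.
have [m [a' [b' [s [a'I b'I abs sS]]]]] := tuple_pair_factor ab.
have same (r : T -> T -> Prop) : (forall i j, r (a i) (a j) <-> r (b i) (b j)) ->
    forall mu nu, r (a' mu) (a' nu) <-> r (b' mu) (b' nu).
  move=> rab mu nu; have [i <-] := sS mu; have [j <-] := sS nu.
  by rewrite -!(proj1 (abs _)) -!(proj2 (abs _)).
have [g [Qg ga']] := hom m a' b' a'I b'I (same _ r1ab) (same _ r2ab).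
by exists g; split=> // i; rewrite (proj1 (abs i)) ga' -(proj2 (abs i)).
Qed.

Definition tup2 (T : Type) (x y : T) : 'I_2 -> T := fun i => if nat_of_ord i == 0 then x else y.

Lemma forall_ord2 (Q : 'I_2 -> Prop) : Q ord0 -> Q ord_max -> forall i, Q i.
Proof.
move=> Q0 Q1 [[|[|//]] i2].
- by rewrite (_ : Ordinal i2 = ord0) //; apply: val_inj.
- by rewrite (_ : Ordinal i2 = ord_max) //; apply: val_inj.
Qed.

(** * Behaviour tables and their classification *)

(* Types of pairs (x, y) in (P; ≤, ≺): [TE] x = y, [TL] x < y, [TG] y < x, [TP] x ⊥ y and x ≺ y,
   [TM] x ⊥ y and y ≺ x.  Orbits of pairs in (P; ≤): [OE] =, [OL] <, [OG] >, [OI] ⊥. *)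
Inductive ty := TE | TL | TG | TP | TM.
Inductive oty := OE | OL | OG | OI.

Definition ty_eqb a b :=
  match a, b with TE, TE | TL, TL | TG, TG | TP, TP | TM, TM => true | _, _ => false end.
Lemma ty_eqP : Equality.axiom ty_eqb. Proof. by do 2!case; constructor. Qed.
HB.instance Definition _ := hasDecEq.Build ty ty_eqP.
Definition oty_eqb a b :=
  match a, b with OE, OE | OL, OL | OG, OG | OI, OI => true | _, _ => false end.
Lemma oty_eqP : Equality.axiom oty_eqb. Proof. by do 2!case; constructor. Qed.
HB.instance Definition _ := hasDecEq.Build oty oty_eqP.

Definition trev t := match t with TE => TE | TL => TG | TG => TL | TP => TM | TM => TP end.
Definition orev o := match o with OE => OE | OL => OG | OG => OL | OI => OI end.
Definition ole o := (o == OE) || (o == OL).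

Lemma trevK : involutive trev. Proof. by case. Qed.

Definition allty := [:: TE; TL; TG; TP; TM].
Definition allo := [:: OE; OL; OG; OI].

(* The behaviour of a canonical [f]: [tab a b] is the orbit of [(f x y, f x' y')] whenever
   [typ x x' = a] and [typ y y' = b]. *)
Definition table := ty -> ty -> oty.
Definition swaptab (tab : table) : table := fun a b => tab b a.

Definition dominated_table (tab : table) :=
  all (fun b => tab TL b == OL) allty && all (fun b => tab TP b == OI) allty.
Definition lt_or_inc o := (o == OL) || (o == OI).
Definition embedding_table (tab : table) :=
  [&& tab TL TL == OL, tab TL TG == OI, tab TL TM == OI, all (fun b => tab TP b == OI) allty,
      lt_or_inc (tab TL TE), lt_or_inc (tab TL TP), lt_or_inc (tab TE TL)
    & lt_or_inc (tab TE TP)].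
Definition good_table tab :=
  [|| dominated_table tab, dominated_table (swaptab tab), embedding_table tab
    | embedding_table (swaptab tab)].

(* A table commuting with reversal and with the entries forced by the preservation of
   [<] and [_|_] is determined by nine entries. *)
Definition table_of (v : seq oty) : table := fun a b =>
  let w n := nth OE v n in
  match a, b with
  | TE, TE => OE | TL, TL => OL | TG, TG => OG | TP, (TP | TM) | TM, (TP | TM) => OI
  | TE, TL => w 0 | TE, TG => orev (w 0) | TE, TP => w 1 | TE, TM => orev (w 1)
  | TL, TE => w 2 | TG, TE => orev (w 2) | TL, TG => w 3 | TG, TL => orev (w 3)
  | TL, TP => w 4 | TG, TM => orev (w 4) | TL, TM => w 5 | TG, TP => orev (w 5)
  | TP, TE => w 6 | TM, TE => orev (w 6) | TP, TL => w 7 | TM, TG => orev (w 7)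
  | TP, TG => w 8 | TM, TL => orev (w 8)
  end.

(* The type of [(i, j)] in the structure on [nat] whose strict order is [rs] and whose
   linear extension is the natural order. *)
Definition styp (rs : seq (nat * nat)) (i j : nat) : ty :=
  if i == j then TE else if (i, j) \in rs then TL else if (j, i) \in rs then TG
  else if i < j then TP else TM.

Definition valid_rel n (rs : seq (nat * nat)) :=
  all (fun i => all (fun j => all (fun k =>
    [&& (i, i) \notin rs, ((i, j) \in rs) ==> (i < j)
      & ((i, j) \in rs) ==> ((j, k) \in rs) ==> ((i, k) \in rs)])
    (iota 0 n)) (iota 0 n)) (iota 0 n).

Lemma valid_rel_porder n rs : valid_rel n rs ->
  let r (i j : 'I_n) := (i == j) || (((i : nat), (j : nat)) \in rs) in
  [/\ forall i, r i i, forall i j, r i j -> r j i -> i = j, forall i j k, r i j -> r j k -> r i k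
    & forall i j, r i j -> i <> j -> i < j].
Proof.
move=> rsV r.
have V (i j k : 'I_n) : [&& ((i : nat), (i : nat)) \notin rs,
    (((i : nat), (j : nat)) \in rs) ==> (i < j)
  & (((i : nat), (j : nat)) \in rs) ==> (((j : nat), (k : nat)) \in rs) ==>
    (((i : nat), (k : nat)) \in rs)].
  by apply: (allP (allP (allP rsV i _) j _) k _); rewrite mem_iota ltn_ord.
have r_lt i j : r i j -> i <> j -> i < j.
  rewrite /r => /orP[/eqP -> //|ij] _.
  by have /and3P[_ /implyP/(_ ij) ->] := V i j i.
split=> [i|i j rij rji|i j k|//]; first by rewrite /r eqxx.
- apply/eqP; apply: contraT => nij.
  have := ltn_trans (r_lt _ _ rij (elimN eqP nij)) (r_lt _ _ rji (elimN eqP _)).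
  by rewrite ltnn; apply; rewrite eq_sym.
- rewrite /r => /orP[/eqP -> //|ij] /orP[/eqP <-|jk]; first by rewrite ij orbT.
  by have /and3P[_ _ /implyP/(_ ij)/implyP/(_ jk) ->] := V i j k; rewrite orbT.
Qed.

(* A configuration stands for the three points [(a1 (nth 0 m1 i), a2 (nth 0 m2 i))], [i < 3],
   of [P^2], where [a1] (resp. [a2]) realizes [styp rs1] (resp. [styp rs2]) on [{0, 1, 2}]. *)
Record config :=
  Config { rs1 : seq (nat * nat); m1 : seq nat; rs2 : seq (nat * nat); m2 : seq nat }.

Definition i3 := iota 0 3.
Definition valid_config c :=
  [&& valid_rel 3 (rs1 c), all (gtn 3) (m1 c), valid_rel 3 (rs2 c) & all (gtn 3) (m2 c)].

Definition point_types c (i j : nat) : ty * ty :=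
  (styp (rs1 c) (nth 0 (m1 c) i) (nth 0 (m1 c) j), styp (rs2 c) (nth 0 (m2 c) i) (nth 0 (m2 c) j)).
Definition config_types c := [seq [seq point_types c i j | j <- i3] | i <- i3].

(* [vm_compute] is strict: [all] evaluates every conjunct, [lall] stops at the first false one. *)
Fixpoint lall (T : Type) (p : T -> bool) (s : seq T) : bool :=
  if s is x :: s' then (if p x then lall p s' else false) else true.

Lemma lallE (T : Type) (p : T -> bool) s : lall p s = all p s.
Proof. by elim: s => //= x s ->; case: (p x). Qed.

(* For the orbits [a], [b], [c] of [(x, y)], [(y, z)], [(x, z)]. *)
Definition triangle_ok (a b c : oty) := (ole a ==> ole b ==> ole c) && ((a == OE) ==> (b == c)).

Definition triples3 := [:: (0, 1, 2); (0, 2, 1); (1, 0, 2); (1, 2, 0); (2, 0, 1); (2, 1, 0)].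

Definition tab_at (tab : table) (T : seq (seq (ty * ty))) i j :=
  let p := nth (TE, TE) (nth [::] T i) j in tab p.1 p.2.

Definition types_ok (tab : table) (T : seq (seq (ty * ty))) :=
  lall (fun t => let: (i, j, k) := t in
    triangle_ok (tab_at tab T i j) (tab_at tab T j k) (tab_at tab T i k)) triples3.

Definition configs := [::
  Config [:: (0,2)] [:: 0; 1; 2] [:: (0,1); (0,2); (1,2)] [:: 2; 1; 0];
  Config [:: (0,1); (0,2); (1,2)] [:: 0; 0; 1] [:: (0,1); (0,2); (1,2)] [:: 0; 1; 0];
  Config [:: (0,1); (0,2); (1,2)] [:: 0; 0; 0] [:: (0,2)] [:: 0; 1; 2];
  Config [:: (0,2)] [:: 0; 1; 2] [:: (0,1); (0,2); (1,2)] [:: 0; 0; 0];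
  Config [:: (0,2); (1,2)] [:: 0; 1; 2] [:: (0,2)] [:: 0; 2; 1];
  Config [:: (0,2); (1,2)] [:: 0; 1; 2] [:: (0,2); (1,2)] [:: 1; 2; 0];
  Config [:: (0,1); (0,2); (1,2)] [:: 0; 0; 1] [:: (0,2); (1,2)] [:: 0; 1; 1];
  Config [:: (0,1); (0,2); (1,2)] [:: 0; 0; 1] [:: (0,1); (0,2)] [:: 0; 1; 2];
  Config [:: (1,2)] [:: 0; 1; 2] [:: (0,1)] [:: 0; 1; 2];
  Config [:: (1,2)] [:: 0; 1; 2] [:: (0,1); (0,2); (1,2)] [:: 0; 0; 1];
  Config [:: (0,1); (0,2); (1,2)] [:: 0; 1; 2] [:: (1,2)] [:: 1; 0; 2];
  Config [:: (0,2); (1,2)] [:: 0; 1; 2] [:: (0,1); (0,2); (1,2)] [:: 0; 2; 1];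
  Config [:: (1,2)] [:: 0; 1; 2] [:: (0,1); (0,2); (1,2)] [:: 1; 0; 1];
  Config [:: (0,1); (0,2); (1,2)] [:: 0; 0; 1] [:: (0,1); (0,2); (1,2)] [:: 0; 1; 1];
  Config [:: (0,1); (0,2); (1,2)] [:: 0; 1; 2] [:: (0,2)] [:: 2; 1; 0];
  Config [:: (0,1); (0,2); (1,2)] [:: 0; 1; 2] [:: (0,2); (1,2)] [:: 1; 2; 0];
  Config [:: (0,2)] [:: 0; 1; 2] [:: (0,1); (0,2); (1,2)] [:: 1; 2; 0];
  Config [:: (0,2); (1,2)] [:: 0; 0; 1] [:: (1,2)] [:: 0; 1; 2];
  Config [:: (0,1); (0,2); (1,2)] [:: 0; 1; 2] [:: (0,2)] [:: 0; 2; 1];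
  Config [:: (0,2); (1,2)] [:: 0; 0; 1] [:: (0,1); (0,2); (1,2)] [:: 0; 2; 1];
  Config [:: (0,1); (0,2); (1,2)] [:: 0; 1; 2] [:: (0,2); (1,2)] [:: 0; 1; 0]].

Lemma configs_valid : all valid_config configs. Proof. by []. Qed.

Definition all_config_types := map config_types configs.

Fixpoint words n : seq (seq oty) :=
  if n is n'.+1 then [seq o :: w | o <- allo, w <- words n'] else [:: [::]].

Lemma words_size (w : seq oty) : w \in words (size w).
Proof. by elim: w => //= o w IH; case: o; rewrite !mem_cat (map_f _ IH) ?orbT. Qed.

Lemma table_classification :
  lall (fun v => lall (types_ok (table_of v)) all_config_types ==> good_table (table_of v))
       (words 9).
Proof. by vm_compute. Qed.

Lemma good_table_of (v : seq oty) : size v = 9 ->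
  all (types_ok (table_of v)) all_config_types -> good_table (table_of v).
Proof.
move=> v9; have := table_classification; rewrite lallE => /allP/(_ v).
by rewrite -v9 words_size lallE => /(_ isT)/implyP.
Qed.

(** * Types and orbits in the random poset *)

Section RandomPoset.
Variables (P : Type) (le prec : P -> P -> Prop).
Hypothesis HP : random_poset le.
Hypothesis HL : random_poset_linext le prec.

Lemma le_refl x : le x x. Proof. by case: HP => [[refl _] _]; apply: refl. Qed.
Lemma le_anti x y : le x y -> le y x -> x = y.
Proof. by case: HP => [[_ [anti _]] _]; apply: anti. Qed.
Lemma le_trans x y z : le x y -> le y z -> le x z.
Proof. by case: HP => [[_ [_ trans]] _]; apply: trans. Qed.

Lemma prec_irr x : ~ prec x x. Proof. by case: HL => [_ [irr _]]; apply: irr. Qed.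
Lemma prec_trans x y z : prec x y -> prec y z -> prec x z.
Proof. by case: HL => [_ [_ [trans _]]]; apply: trans. Qed.
Lemma prec_total x y : x <> y -> prec x y \/ prec y x.
Proof. by case: HL => [_ [_ [_ [total _]]]]; apply: total. Qed.
Lemma prec_ext x y : strict le x y -> prec x y.
Proof. by case: HL => [_ [_ [_ [_ [ext _]]]]]; apply: ext. Qed.
Lemma prec_asym x y : prec x y -> ~ prec y x.
Proof. by move=> pxy pyx; apply: (prec_irr (prec_trans pxy pyx)). Qed.

Lemma aut_id : is_aut1 le id. Proof. by split; [exists id | ]. Qed.

Lemma aut_eq b x y : is_aut1 le b -> b x = b y <-> x = y.
Proof. by move=> [/bij_inj bI _]; split=> [/bI|->]. Qed.
Lemma aut_strict b x y : is_aut1 le b -> strict le (b x) (b y) <-> strict le x y.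
Proof. by move=> bA; rewrite /strict (aut_eq _ _ bA) -(proj2 bA). Qed.
Lemma aut_incomp b x y : is_aut1 le b -> incomp le (b x) (b y) <-> incomp le x y.
Proof. by move=> [_ ble]; rewrite /incomp -!ble. Qed.

Lemma aut1_extend n (a b : 'I_n -> P) : (forall i j, a i = a j <-> b i = b j) ->
  (forall i j, le (a i) (a j) <-> le (b i) (b j)) ->
  exists g, is_aut1 le g /\ forall i, g (a i) = b i.
Proof.
case: HP => [_ [_ [hom _]]] ab leab.
exact: (homogeneity_noninjective (fun m a' b' a'I b'I le' _ => hom m a' b' a'I b'I le')
  ab leab leab).
Qed.

Lemma aut2_extend n (a b : 'I_n -> P) : (forall i j, a i = a j <-> b i = b j) ->
  (forall i j, le (a i) (a j) <-> le (b i) (b j)) ->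
  (forall i j, prec (a i) (a j) <-> prec (b i) (b j)) ->
  exists g, is_aut2 le prec g /\ forall i, g (a i) = b i.
Proof. by case: HL => [_ [_ [_ [_ [_ [_ [hom _]]]]]]]; exact: (homogeneity_noninjective hom). Qed.

Definition typ x y : ty :=
  if excluded_middle_informative (x = y) then TE
  else if excluded_middle_informative (le x y) then TL
  else if excluded_middle_informative (le y x) then TG
  else if excluded_middle_informative (prec x y) then TP else TM.

Variant typ_spec x y : ty -> Prop :=
| TypE : x = y -> typ_spec x y TE
| TypL : x <> y -> le x y -> typ_spec x y TL
| TypG : x <> y -> ~ le x y -> le y x -> typ_spec x y TG
| TypP : ~ le x y -> ~ le y x -> prec x y -> typ_spec x y TP
| TypM : ~ le x y -> ~ le y x -> ~ prec x y -> typ_spec x y TM.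

Lemma typP x y : typ_spec x y (typ x y).
Proof. by rewrite /typ; do ![case: excluded_middle_informative => ?]; constructor. Qed.

Lemma typ_rels x y : [/\ x = y <-> typ x y = TE, le x y <-> typ x y \in [:: TE; TL],
  le y x <-> typ x y \in [:: TE; TG], prec x y <-> typ x y \in [:: TL; TP]
  & prec y x <-> typ x y \in [:: TG; TM]].
Proof.
case: typP => [<-|nxy lxy|nxy nlxy lyx|nlxy nlyx pxy|nlxy nlyx npxy];
  rewrite !inE /=; split; split=> // h; try by [apply: le_refl].
all: try by case: (prec_irr h).
- by case: nxy; apply: le_anti.
- by apply: prec_ext.
- by case: (prec_asym h); apply: prec_ext.
- by case: (prec_asym h); apply: prec_ext; split=> // e; case: nxy.
- by apply: prec_ext; split=> // e; case: nxy.
- by case: nlxy; rewrite h; apply: le_refl.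
- by case: (prec_asym pxy h).
- by case: nlxy; rewrite h; apply: le_refl.
- have nxy : x <> y by move=> e; apply: nlxy; rewrite e; apply: le_refl.
  by case: (prec_total nxy).
Qed.

Lemma typ_TE x y : typ x y = TE <-> x = y.
Proof. by case: (typ_rels x y) => eE _ _ _ _; apply: iff_sym. Qed.

Lemma typ_TL x y : typ x y = TL <-> strict le x y.
Proof.
have [eE leE _ _ _] := typ_rels x y; rewrite /strict eE leE.
by case: (typ x y); split=> //; case.
Qed.

Lemma typ_TP x y : typ x y = TP <-> incomp le x y /\ prec x y.
Proof.
have [_ leE geE pE _] := typ_rels x y; rewrite /incomp leE geE pE.
by case: (typ x y); split=> //; case=> [[]].
Qed.

Lemma typ_incomp x y : incomp le x y -> typ x y = TP \/ typ x y = TM.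
Proof.
move=> [nlxy nlyx]; have [_ leE geE _ _] := typ_rels x y.
move: nlxy nlyx; rewrite leE geE.
by case: (typ x y) => /= nl ng; [case: nl | case: nl | case: ng | left | right].
Qed.

Lemma typ_rev x y : typ y x = trev (typ x y).
Proof.
case: (typP x y) => [->|nxy lxy|nxy nlxy lyx|nlxy nlyx pxy|nlxy nlyx npxy] /=.
- exact/typ_TE.
- by case: typP => // *; exfalso; eauto using le_anti.
- by case: typP => // *; exfalso; eauto using le_anti.
- have npyx := prec_asym pxy.
  by case: typP => // *; exfalso; subst; eauto using le_refl.
- have nxy : x <> y by move=> e; subst; eauto using le_refl.
  case: typP => // *; exfalso; subst; try by eauto using le_refl.
  by case: (prec_total nxy).
Qed.

Lemma aut2_of_typ a a' b b' : typ a a' = typ b b' ->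
  exists g, is_aut2 le prec g /\ g a = b /\ g a' = b'.
Proof.
move=> ab; have [e1 l1 g1 p1 s1] := typ_rels a a'; have [e2 l2 g2 p2 s2] := typ_rels b b'.
rewrite ab in e1 l1 g1 p1 s1.
have eqE i j : tup2 a a' i = tup2 a a' j <-> tup2 b b' i = tup2 b b' j.
  move: i j; apply: forall_ord2; apply: forall_ord2; rewrite /tup2 /= ?e1 ?e2 //.
  by split=> e; apply/esym; [apply/e2/e1/esym | apply/e1/e2/esym].
have leE i j : le (tup2 a a' i) (tup2 a a' j) <-> le (tup2 b b' i) (tup2 b b' j).
  move: i j; apply: forall_ord2; apply: forall_ord2; rewrite /tup2 /= ?l1 ?l2 ?g1 ?g2 //;
  by split=> _; apply: le_refl.
have precE i j : prec (tup2 a a' i) (tup2 a a' j) <-> prec (tup2 b b' i) (tup2 b b' j).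
  move: i j; apply: forall_ord2; apply: forall_ord2; rewrite /tup2 /= ?p1 ?p2 ?s1 ?s2 //;
  by split=> /prec_irr.
have [g [gA gE]] := aut2_extend eqE leE precE.
by exists g; split=> //; split; [apply: (gE ord0) | apply: (gE ord_max)].
Qed.

Definition otyp x y : oty :=
  if excluded_middle_informative (x = y) then OE
  else if excluded_middle_informative (le x y) then OL
  else if excluded_middle_informative (le y x) then OG else OI.

Variant otyp_spec x y : oty -> Prop :=
| OtypE : x = y -> otyp_spec x y OE
| OtypL : x <> y -> le x y -> otyp_spec x y OL
| OtypG : x <> y -> ~ le x y -> le y x -> otyp_spec x y OG
| OtypI : ~ le x y -> ~ le y x -> otyp_spec x y OI.

Lemma otypP x y : otyp_spec x y (otyp x y).
Proof. by rewrite /otyp; do ![case: excluded_middle_informative => ?]; constructor. Qed.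

Lemma otyp_OE x y : otyp x y = OE <-> x = y.
Proof.
case: otypP => [->|nxy _|nxy _ _|nlxy _]; split=> // e; try by case: (nxy e).
by case: nlxy; rewrite e; apply: le_refl.
Qed.

Lemma otyp_OL x y : otyp x y = OL <-> strict le x y.
Proof. by case: otypP => [->|nxy lxy|nxy nlxy _|nlxy _]; split=> // [[]]. Qed.

Lemma otyp_OI x y : otyp x y = OI <-> incomp le x y.
Proof.
case: otypP => [->|_ lxy|_ _ lyx|nlxy nlyx]; split=> // [[]] //.
by move=> nlxx; case: nlxx; apply: le_refl.
Qed.

Lemma ole_otyp x y : ole (otyp x y) <-> le x y.
Proof.
case: otypP => [->|_ lxy|_ nlxy _|nlxy _]; split=> //; try by move/nlxy.
by move=> _; apply: le_refl.
Qed.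

Lemma otyp_rev x y : otyp y x = orev (otyp x y).
Proof.
case: (otypP x y) => [->|nxy lxy|nxy nlxy lyx|nlxy nlyx] /=; first exact/otyp_OE.
all: by case: otypP => // *; exfalso; subst; eauto using le_anti, le_refl.
Qed.

Lemma otyp_aut g x y : is_aut1 le g -> otyp (g x) (g y) = otyp x y.
Proof.
move=> gA; rewrite /otyp (propositional_extensionality _ _ (aut_eq _ _ gA)).
by rewrite -!(propositional_extensionality _ _ (proj2 gA _ _)).
Qed.

Lemma triangle_ok_otyp x y z : triangle_ok (otyp x y) (otyp y z) (otyp x z).
Proof.
apply/andP; split.
- by apply/implyP => /ole_otyp lxy; apply/implyP => /ole_otyp lyz; apply/ole_otyp/(le_trans lxy).
- by apply/implyP => /eqP/otyp_OE ->.
Qed.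

Lemma realize_styp n rs : valid_rel n rs ->
  exists a : 'I_n -> P, forall i j : 'I_n, typ (a i) (a j) = styp rs i j.
Proof.
move=> /valid_rel_porder[r_refl r_anti r_trans r_lt].
have q_irr (i : 'I_n) : ~ i < i by rewrite ltnn.
have q_total (i j : 'I_n) : i <> j -> i < j \/ j < i.
  by move=> nij; case: (ltngtP i j) => [|| /val_inj //]; [left | right].
case: HL => [_ [_ [_ [_ [_ [_ [_ emb]]]]]]].
have [a [aI [aR aQ]]] := emb n _ _ r_refl r_anti r_trans q_irr (fun i j k => @ltn_trans j i k)
  q_total r_lt.
exists a => i j; rewrite /styp (inj_eq val_inj).
have [<-|nij] := eqVneq i j; first exact/typ_TE.
have rij : (((i : nat), (j : nat)) \in rs) <-> le (a i) (a j) by rewrite -aR (negbTE nij).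
have rji : (((j : nat), (i : nat)) \in rs) <-> le (a j) (a i) by rewrite -aR eq_sym (negbTE nij).
have qij : (i < j) <-> prec (a i) (a j) by rewrite -aQ.
have falseE (b : bool) Q : (b <-> Q) -> ~ Q -> b = false by move=> bQ nQ; apply/negP => /bQ.
case: typP => [/aI/eqP|_ l|_ nl l|nl nl' p|nl nl' np]; first by rewrite (negbTE nij).
- by rewrite (proj2 rij l).
- by rewrite (falseE _ _ rij nl) (proj2 rji l).
- by rewrite (falseE _ _ rij nl) (falseE _ _ rji nl') (proj2 qij p).
- by rewrite (falseE _ _ rij nl) (falseE _ _ rji nl') (falseE _ _ qij np).
Qed.

Lemma ex_typ t : exists p : P * P, typ p.1 p.2 = t.
Proof.
have [a aE] := realize_styp (n := 2) (rs := [:: (0, 1)]) isT.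
have [b bE] := realize_styp (n := 2) (rs := [::]) isT.
by case: t; [exists (a ord0, a ord0) | exists (a ord0, a ord_max) | exists (a ord_max, a ord0)
  | exists (b ord0, b ord_max) | exists (b ord_max, b ord0)]; rewrite /= ?aE ?bE.
Qed.

(* By [outP], the choice of representatives does not matter for canonical [f]. *)
Definition rep t : P * P := sval (constructive_indefinite_description _ (ex_typ t)).

Lemma repP t : typ (rep t).1 (rep t).2 = t.
Proof. by rewrite /rep; case: constructive_indefinite_description. Qed.

Definition out (f : P -> P -> P) : table :=
  fun a b => otyp (f (rep a).1 (rep b).1) (f (rep a).2 (rep b).2).

Lemma outP f : canonical2 le prec f -> forall x x' y y',
  otyp (f x y) (f x' y') = out f (typ x x') (typ y y').
Proof.
move=> fcan x x' y y'.
have [g1 [g1A [g1x g1x']]] := aut2_of_typ (esym (repP (typ x x'))).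
have [g2 [g2A [g2y g2y']]] := aut2_of_typ (esym (repP (typ y y'))).
have [b [bA bE]] := fcan 2 isT g1 g2 g1A g2A (tup2 x x') (tup2 y y').
have := bE ord0; have := bE ord_max; rewrite /tup2 /= /out -g1x -g1x' -g2y -g2y' => -> ->.
exact/esym/otyp_aut.
Qed.

Lemma aut_reverse_prec x y : incomp le x y -> exists b, is_aut1 le b /\ prec (b y) (b x).
Proof.
move=> [nlxy nlyx]; have [[p q] /typ_TP /= [[nlpq nlqp] pq]] := ex_typ TP.
have neq u v : ~ le u v -> u <> v by move=> nl e; apply: nl; rewrite e; apply: le_refl.
have eqE i j : tup2 x y i = tup2 x y j <-> tup2 q p i = tup2 q p j.
  move: i j; apply: forall_ord2; apply: forall_ord2; rewrite /tup2 //=;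
  by split=> e; exfalso; first [exact: neq _ _ nlxy e | exact: neq _ _ nlyx e
    | exact: neq _ _ nlpq e | exact: neq _ _ nlqp e].
have leE i j : le (tup2 x y i) (tup2 x y j) <-> le (tup2 q p i) (tup2 q p j).
  by move: i j; apply: forall_ord2; apply: forall_ord2; rewrite /tup2 //=;
    split=> // _; apply: le_refl.
have [b [bA bE]] := aut1_extend eqE leE.
by exists b; split=> //; rewrite (bE ord0) (bE ord_max).
Qed.

Lemma le_strictE x y : le x y <-> x = y \/ strict le x y.
Proof.
split=> [lxy|[<-|[]//]]; last exact: le_refl.
by case: (classic (x = y)) => [|nxy]; [left | right].
Qed.

Lemma sat_aut g phi env : is_aut1 le g -> sat le env phi <-> sat le (fun n => g (env n)) phi.
Proof.
move=> gA; have [[h gK hK] gle] := gA.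
have updE env' i x : (fun n => g (upd env' i x n)) = upd (fun n => g (env' n)) i (g x).
  by apply: functional_extensionality => n; rewrite /upd; case: (n == i).
elim: phi env => [i j|i j|p IH|p IHp q IHq|i p IH] env /=.
- exact: gle.
- exact: iff_sym (aut_eq _ _ gA).
- by rewrite IH.
- by rewrite IHp IHq.
- split=> [[x /IH]|[x]]; first by rewrite updE; exists (g x).
  by rewrite -(hK x) -updE -IH; exists (h x).
Qed.

(** * Polymorphisms *)

Section Polymorphisms.
Variables (I : Type) (ar : I -> nat) (R : forall i, ('I_(ar i) -> P) -> Prop).
Arguments R : clear implicits.
Hypothesis HR : forall i, fo_definable le (R i).

Lemma rel_aut g i t : is_aut1 le g -> R i t -> R i (fun l => g (t l)).
Proof.
move=> gA Rt; have [phi phiE] := HR i.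
pose env n := oapp t (rep TE).1 (insub n : option 'I_(ar i)).
have envE : (fun j : 'I_(ar i) => env j) = t.
  by apply: functional_extensionality => j; rewrite /env valK.
have /(sat_aut _ _ gA) /phiE : sat le env phi by apply/phiE; rewrite envE.
congr (R i); apply: functional_extensionality => j; by rewrite /env valK.
Qed.

Lemma pol2_comp f g1 g2 : pol2 R f -> pol2 R g1 -> pol2 R g2 ->
  pol2 R (fun x y => f (g1 x y) (g2 x y)).
Proof. by move=> fP g1P g2P i t1 t2 R1 R2; apply: fP; [apply: g1P | apply: g2P]. Qed.

Lemma pol2_aut_fst g : is_aut1 le g -> pol2 R (fun x _ => g x).
Proof. by move=> gA i t1 t2 R1 _; apply: rel_aut. Qed.

Lemma pol2_aut_snd g : is_aut1 le g -> pol2 R (fun _ y => g y).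
Proof. by move=> gA i t1 t2 _ R2; apply: rel_aut. Qed.

Lemma pol2_swap f : pol2 R f -> pol2 R (fun x y => f y x).
Proof. by move=> fP i t1 t2 R1 R2; apply: fP. Qed.

Lemma pp_definable_pol2 k (S : ('I_k -> P) -> Prop) f : pp_definable R S -> pol2 R f ->
  forall t1 t2, S t1 -> S t2 -> S (fun l => f (t1 l) (t2 l)).
Proof.
move=> [m [atoms SE]] fP t1 t2 /SE [e1 [e1t A1]] /SE [e2 [e2t A2]]; apply/SE.
exists (fun n => f (e1 n) (e2 n)); split=> [j|a]; first by rewrite e1t e2t.
by move: (A1 a) (A2 a); case: (atoms a) => [x y /= -> ->|i v /=]; [| apply: fP].
Qed.

(* An operation realizing, on every finite set of rows, the same equalities and order relations
   as some polymorphism is a polymorphism: homogeneity and the invariance of [R] under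
   automorphisms transport one to the other. *)
Lemma pol2_of_local e :
  (forall k (u v : 'I_k -> P), exists g, [/\ pol2 R g,
     forall l l', g (u l) (v l) = g (u l') (v l') <-> e (u l) (v l) = e (u l') (v l')
   & forall l l', le (g (u l) (v l)) (g (u l') (v l')) <-> le (e (u l) (v l)) (e (u l') (v l'))]) ->
  pol2 R e.
Proof.
move=> loc i t1 t2 R1 R2; have [g [gP eqE leE]] := loc _ t1 t2.
have [b [bA bE]] := aut1_extend eqE leE.
have -> : (fun l => e (t1 l) (t2 l)) = (fun l => b (g (t1 l) (t2 l))).
  by apply: functional_extensionality => l; rewrite bE.
by apply: rel_aut => //; apply: gP.
Qed.

Definition rows_injective (g : P -> P -> P) k (u v : 'I_k -> P) :=
  forall l l', g (u l) (v l) = g (u l') (v l') -> u l = u l' /\ v l = v l'.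

Definition rows_lt (g : P -> P -> P) k (u v : 'I_k -> P) l l' :=
  strict le (g (u l) (v l)) (g (u l') (v l')).

Lemma emb_lt_pol2 e : emb_lt le e ->
  (forall k (u v : 'I_k -> P), exists g, [/\ pol2 R g, rows_injective g u v & forall l l',
     rows_lt g u v l l' <-> strict le (u l) (u l') /\ strict le (v l) (v l')]) ->
  pol2 R e.
Proof.
move=> [eI eS] loc; apply: pol2_of_local => k u v.
have [g [gP gI gS]] := loc k u v.
have eqE l l' : g (u l) (v l) = g (u l') (v l') <-> e (u l) (v l) = e (u l') (v l').
  by split=> [/gI|/eI] [-> ->].
by exists g; split=> // l l'; rewrite !le_strictE eqE -/(rows_lt g u v l l') gS eS.
Qed.

Lemma emb_le_pol2 e : emb_le le e ->
  (forall k (u v : 'I_k -> P), exists g, [/\ pol2 R g, rows_injective g u v & forall l l',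
     rows_lt g u v l l' <->
     [/\ le (u l) (u l'), le (v l) (v l') & ~ (u l = u l' /\ v l = v l')]]) ->
  pol2 R e.
Proof.
move=> [eI eS] loc; apply: pol2_of_local => k u v.
have [g [gP gI gS]] := loc k u v.
have eqE l l' : g (u l) (v l) = g (u l') (v l') <-> e (u l) (v l) = e (u l') (v l').
  by split=> [/gI|/eI] [-> ->].
exists g; split=> // l l'; rewrite eS le_strictE eqE -/(rows_lt g u v l l') gS; split.
- by case=> [/eI [-> ->]|[lu lv _]]; split=> //; apply: le_refl.
- move=> [luu lvv]; case: (classic (u l = u l' /\ v l = v l')) => [[-> ->]|nuv];
    by [left | right].
Qed.

Hypothesis Hlt : pp_definable R (binrel (strict le)).
Hypothesis Hinc : pp_definable R (binrel (incomp le)).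

Section Canonical.
Variable f : P -> P -> P.
Hypothesis fcan : canonical2 le prec f.
Hypothesis fpol : pol2 R f.

Lemma f_strict x x' y y' : strict le x x' -> strict le y y' -> strict le (f x y) (f x' y').
Proof.
by move=> xx' yy'; exact: (pp_definable_pol2 (t1 := tup2 x x') (t2 := tup2 y y') Hlt fpol xx' yy').
Qed.

Lemma f_incomp x x' y y' : incomp le x x' -> incomp le y y' -> incomp le (f x y) (f x' y').
Proof.
by move=> xx' yy'; exact: (pp_definable_pol2 (t1 := tup2 x x') (t2 := tup2 y y') Hinc fpol xx' yy').
Qed.

Lemma out_rev a b : out f (trev a) (trev b) = orev (out f a b).
Proof.
by rewrite {2}/out -otyp_rev outP // (typ_rev (rep a).1) (typ_rev (rep b).1) !repP.
Qed.

Lemma incomp_rep t : t = TP \/ t = TM -> incomp le (rep t).1 (rep t).2.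
Proof.
have [_ leE geE _ _] := typ_rels (rep t).1 (rep t).2; rewrite /incomp leE geE repP.
by case=> ->.
Qed.

Lemma out_TE_TE : out f TE TE = OE.
Proof. by apply/otyp_OE; rewrite !(proj1 (typ_TE _ _) (repP TE)). Qed.

Lemma out_TL_TL : out f TL TL = OL.
Proof. by apply/otyp_OL/f_strict; apply/typ_TL/repP. Qed.

Lemma out_TP_TP : out f TP TP = OI.
Proof. by apply/otyp_OI/f_incomp; apply: incomp_rep; left. Qed.

Lemma out_TP_TM : out f TP TM = OI.
Proof. by apply/otyp_OI/f_incomp; apply: incomp_rep; [left | right]. Qed.

Definition out_entries := [:: out f TE TL; out f TE TP; out f TL TE; out f TL TG;
  out f TL TP; out f TL TM; out f TP TE; out f TP TL; out f TP TG].

Lemma out_table_of : out f = table_of out_entries.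
Proof.
apply: functional_extensionality => a; apply: functional_extensionality => b.
have r := out_rev; case: a; case: b => //=;
  rewrite ?out_TE_TE ?out_TL_TL ?out_TP_TP ?out_TP_TM //.
all: first [ exact: (r TE TL) | exact: (r TE TP) | exact: (r TL TE) | exact: (r TL TG)
  | exact: (r TL TM) | exact: (r TL TP) | exact: (r TP TE) | exact: (r TP TG) | exact: (r TP TL)
  | by rewrite (r TP TM) out_TP_TM | by rewrite (r TP TP) out_TP_TP
  | by rewrite (r TL TL) out_TL_TL ].
Qed.

Lemma out_types_ok c : valid_config c -> types_ok (out f) (config_types c).
Proof.
case: c => rs1 m1 rs2 m2 /and4P[/= v1 /allP w1 v2 /allP w2].
have [a1 a1E] := realize_styp v1; have [a2 a2E] := realize_styp v2.
have nth3 m : {in m, forall x, 3 > x} -> forall i, nth 0 m i < 3.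
  move=> m3 i; case: (ltnP i (size m)) => [im|mi]; first exact/m3/mem_nth.
  by rewrite nth_default.
pose z i := (a1 (inord (nth 0 m1 i)), a2 (inord (nth 0 m2 i))).
have E i j : i < 3 -> j < 3 ->
    tab_at (out f) (config_types (Config rs1 m1 rs2 m2)) i j =
    otyp (f (z i).1 (z i).2) (f (z j).1 (z j).2).
  move=> i3 j3; rewrite /tab_at /config_types (nth_map 0) ?size_iota // (nth_map 0) ?size_iota //.
  rewrite !nth_iota // outP //= !a1E !a2E /=.
  by rewrite !inordK; try apply: nth3.
rewrite /types_ok lallE; apply/allP => -[[i j] k] ijk.
have /allP/(_ _ ijk) /and3P[i3 j3 k3] :
  all (fun t => let: (i, j, k) := t in [&& i < 3, j < 3 & k < 3]) triples3 by [].
by rewrite /= !E //; apply: triangle_ok_otyp.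
Qed.

Lemma out_good : good_table (out f).
Proof.
rewrite out_table_of; apply: good_table_of => //.
rewrite -out_table_of /all_config_types all_map.
by apply: sub_all configs_valid => c /out_types_ok.
Qed.

Lemma dominated_first_of_table : dominated_table (out f) -> dominated_first le f.
Proof.
move=> /andP[/allP domL /allP domP] x y x' y'; split.
- move=> /typ_TL xx'; apply/otyp_OL; rewrite outP // xx'.
  by apply/eqP/domL; case: (typ y y').
- have out_TP b : out f TP b = OI by apply/eqP/domP; case: b.
  move=> /typ_incomp xx'; apply/otyp_OI; rewrite outP //.
  case: xx' => ->; first exact: out_TP.
  by rewrite -(trevK (typ y y')) (out_rev TP) out_TP.
Qed.

(** * The embedding case *)

Section EmbeddingTable.
Hypothesis femb : embedding_table (out f).
Local Notation o := (out f).

Lemma embedding_entries :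
  [/\ o TL TL = OL, o TL TG = OI, o TL TM = OI, forall b, o TP b = OI
    & [/\ lt_or_inc (o TL TE), lt_or_inc (o TL TP), lt_or_inc (o TE TL) & lt_or_inc (o TE TP)]].
Proof.
move: femb => /and5P[/eqP LL /eqP LG /eqP LM /allP TPb /and4P[LE LP EL EP]].
by split=> // b; apply/eqP/TPb; case: b.
Qed.

Lemma out_TP b : o TP b = OI. Proof. by case: embedding_entries. Qed.

Lemma out_TM b : o TM b = OI.
Proof. by rewrite -(trevK b) (out_rev TP) out_TP. Qed.

Lemma out_TL b : o TL b = OL \/ o TL b = OI.
Proof.
have lt_or_incP x : lt_or_inc x -> x = OL \/ x = OI by case: x => // _; [left | right].
case: embedding_entries => LL LG LM _ [LE LP _ _].
by case: b; [exact: lt_or_incP | left | right | exact: lt_or_incP | right].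
Qed.

Lemma out_TG b : o TG b = OG \/ o TG b = OI.
Proof. by rewrite -(trevK b) (out_rev TL); case: (out_TL (trev b)) => ->; [left | right]. Qed.

Lemma out_TE b : b <> TE -> o TE b <> OE.
Proof.
case: embedding_entries => _ _ _ _ [_ _ EL EP].
by case: b => // _; rewrite ?(out_rev TE TL) ?(out_rev TE TP); move: EL EP;
  case: (o TE TL); case: (o TE TP).
Qed.

Lemma out_OE a b : o a b = OE -> a = TE /\ b = TE.
Proof.
case: a; rewrite ?out_TP ?out_TM //.
- by case: (eqVneq b TE) => [-> //|/eqP/out_TE].
- by case: (out_TL b) => ->.
- by case: (out_TG b) => ->.
Qed.

Definition lt_at_eq := o TL TE == OL.
Definition lt_at_prec := o TL TP == OL.

Lemma out_OL a b : a <> TE ->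
  o a b = OL <-> a = TL /\ (b = TL \/ (lt_at_eq /\ b = TE) \/ (lt_at_prec /\ b = TP)).
Proof.
case: embedding_entries => LL LG LM _ _.
rewrite /lt_at_eq /lt_at_prec; case: a => // _; last first.
- by rewrite out_TM; split=> // [[]].
- by rewrite out_TP; split=> // [[]].
- by case: (out_TG b) => ->; split=> // [[]].
case: b; rewrite ?LL ?LG ?LM; split=> //.
- by move=> LE; split=> //; right; left; rewrite LE.
- by case=> _ [//|[[/eqP -> //]|[//]]].
- by split=> //; left.
- by case=> _ [//|[[//]|[//]]].
- by move=> LP; split=> //; right; right; rewrite LP.
- by case=> _ [//|[[//]|[/eqP -> //]]].
- by case=> _ [//|[[//]|[//]]].
Qed.

Lemma f_injective p p' q q' : f p q = f p' q' -> p = p' /\ q = q'.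
Proof. by move/otyp_OE; rewrite outP // => /out_OE[/typ_TE ? /typ_TE ?]. Qed.

Definition snd_ok q q' :=
  strict le q q' \/ (lt_at_eq /\ q = q') \/ (lt_at_prec /\ incomp le q q' /\ prec q q').

Lemma f_strictE p p' q q' : p <> p' ->
  strict le (f p q) (f p' q') <-> strict le p p' /\ snd_ok q q'.
Proof.
move=> pp'; rewrite -otyp_OL outP // out_OL; last by move/typ_TE.
by rewrite /snd_ok typ_TL typ_TL typ_TE typ_TP.
Qed.

Lemma snd_ok_aut b q q' : is_aut1 le b ->
  snd_ok (b q) (b q') <->
  strict le q q' \/ (lt_at_eq /\ q = q') \/ (lt_at_prec /\ incomp le q q' /\ prec (b q) (b q')).
Proof. by move=> bA; rewrite /snd_ok (aut_strict _ _ bA) (aut_eq _ _ bA) (aut_incomp _ _ bA). Qed.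

Section Rows.
Variables (k : nat) (u v : 'I_k -> P).

Lemma compose_step g c b : pol2 R g -> rows_injective g u v -> is_aut1 le b ->
  pol2 R (fun x y => b (c x y)) ->
  [/\ pol2 R (fun x y => f (g x y) (b (c x y))),
      rows_injective (fun x y => f (g x y) (b (c x y))) u v
    & forall l l', rows_lt (fun x y => f (g x y) (b (c x y))) u v l l' <->
      rows_lt g u v l l' /\ snd_ok (b (c (u l) (v l))) (b (c (u l') (v l')))].
Proof.
move=> gP gI bA bcP; split=> [|l l' /f_injective[/gI] //|l l'].
  exact: pol2_comp.
rewrite /rows_lt; case: (classic (g (u l) (v l) = g (u l') (v l'))) => [e|ne].
  by have [-> ->] := gI _ _ e; split=> [[_ []]|[[_ []]]].
exact: f_strictE.
Qed.

Definition cmp_ok (c : P -> P -> P) l l' :=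
  strict le (c (u l) (v l)) (c (u l') (v l')) \/ (lt_at_eq /\ c (u l) (v l) = c (u l') (v l')).

(* Composing [f] with [g] on the left and with a suitable automorphic image of [c] on the right
   removes, one ordered pair of rows at a time, the strict relations of [g] on rows whose
   [c]-values are incomparable: the automorphism puts them in the wrong [prec]-order. *)
Lemma refine_by c g0 : (forall b, is_aut1 le b -> pol2 R (fun x y => b (c x y))) ->
  pol2 R g0 -> rows_injective g0 u v ->
  exists g, [/\ pol2 R g, rows_injective g u v
    & forall l l', rows_lt g u v l l' <-> rows_lt g0 u v l l' /\ cmp_ok c l l'].
Proof.
move=> cP g0P g0I; pose z l := c (u l) (v l).
have [g1P g1I g1E] := compose_step g0P g0I aut_id (cP _ aut_id).
have inv (s : seq ('I_k * 'I_k)) : exists g, [/\ pol2 R g, rows_injective g u v,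
    forall l l', rows_lt g u v l l' ->
      rows_lt g0 u v l l' /\ (cmp_ok c l l' \/ incomp le (z l) (z l')),
    forall l l', rows_lt g0 u v l l' -> cmp_ok c l l' -> rows_lt g u v l l'
  & forall p, p \in s -> incomp le (z p.1) (z p.2) -> ~ rows_lt g u v p.1 p.2].
  elim: s => [|[i j] s [g [gP gI gsub gsup gkill]]].
    exists (fun x y => f (g0 x y) (id (c x y))); split=> // l l'.
    - move=> /g1E[lt0 ok]; split=> //.
      by case: ok => [lt|[eq|[_ [inc _]]]]; [left; left | left; right | right].
    - by move=> lt0 ok; apply/g1E; split=> //; case: ok => [lt|eq]; [left | right; left].
  have [b [bA bij]] : exists b, is_aut1 le b /\ (incomp le (z i) (z j) -> prec (b (z j)) (b (z i))).
    case: (classic (incomp le (z i) (z j))) => [inc|ninc].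
      by have [b [bA ?]] := aut_reverse_prec inc; exists b.
    by exists id; split=> //; apply: aut_id.
  have [hP hI hE] := compose_step gP gI bA (cP _ bA).
  exists (fun x y => f (g x y) (b (c x y))); split=> //.
  - by move=> l l' /hE[/gsub].
  - move=> l l' lt0 ok; apply/hE; split; first exact: gsup.
    by apply/snd_ok_aut => //; case: ok; [left | right; left].
  - move=> p; rewrite in_cons => /orP[/eqP -> /=|ps] inc /hE[ltg ok]; last exact: gkill ps inc ltg.
    have [nl _] := inc; move/(snd_ok_aut _ _ bA): ok => [[lt _]|[[_ eq]|[_ [_ pij]]]].
    + exact: nl.
    + by apply: nl; rewrite /z eq; apply: le_refl.
    + exact: prec_asym pij (bij inc).
have [g [gP gI gsub gsup gkill]] := inv [seq (i, j) | i <- ord_enum k, j <- ord_enum k].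
exists g; split=> // l l'; split; last by case; apply: gsup.
move=> ltg; have [lt0 [ok|inc]] := gsub _ _ ltg; first by [].
by case: (gkill (l, l') (allpairs_f pair (mem_ord_enum l) (mem_ord_enum l')) inc ltg).
Qed.

Lemma embedding_pattern : exists g, [/\ pol2 R g, rows_injective g u v & forall l l',
  rows_lt g u v l l' <-> [/\ o (typ (u l) (u l')) (typ (v l) (v l')) = OL,
                         cmp_ok (fun _ y => y) l l' & cmp_ok (fun x _ => x) l l']].
Proof.
have fI : rows_injective f u v by move=> l l' /f_injective.
have [g1 [g1P g1I g1E]] := refine_by (fun b bA => pol2_aut_snd bA) fpol fI.
have [g2 [g2P g2I g2E]] := refine_by (fun b bA => pol2_aut_fst bA) g1P g1I.
exists g2; split=> // l l'; rewrite g2E g1E /rows_lt -otyp_OL outP //.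
by split=> [[[]]|[]].
Qed.
End Rows.

Lemma pol2_emb_lt_of_not_lt_at_eq e : emb_lt le e -> ~~ lt_at_eq -> pol2 R e.
Proof.
move=> eE neq; apply: emb_lt_pol2 => // k u v.
have [g [gP gI gE]] := embedding_pattern u v.
exists g; split=> // l l'; rewrite gE /cmp_ok (negbTE neq).
split=> [[_ [vv|[//]] [uu|[//]]] //|[uu vv]].
split; [|by left|by left].
by rewrite (proj2 (typ_TL _ _) uu) (proj2 (typ_TL _ _) vv) out_TL_TL.
Qed.

Lemma pol2_emb_le_of_lt_at_eq e : emb_le le e -> lt_at_eq -> o TE TL = OL -> pol2 R e.
Proof.
move=> eE eq EL; apply: emb_le_pol2 => // k u v.
have [g [gP gI gE]] := embedding_pattern u v.
exists g; split=> // l l'; rewrite gE /cmp_ok eq; split.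
- case=> oOL vv uu; split.
  + by case: uu => [[]|[_ ->]] //; apply: le_refl.
  + by case: vv => [[]|[_ ->]] //; apply: le_refl.
  + case=> ul vl; move: oOL.
    by rewrite (proj2 (typ_TE _ _) ul) (proj2 (typ_TE _ _) vl) out_TE_TE.
- case=> /le_strictE[ul|uu] /le_strictE[vl|vv] nuv.
  + by case: nuv.
  + split; [|by left|by right].
    by rewrite (proj2 (typ_TE _ _) ul) (proj2 (typ_TL _ _) vv).
  + split; [|by right|by left].
    by rewrite (proj2 (typ_TL _ _) uu) (proj2 (typ_TE _ _) vl); apply/eqP.
  + split; [|by left|by left].
    by rewrite (proj2 (typ_TL _ _) uu) (proj2 (typ_TL _ _) vv) out_TL_TL.
Qed.

Lemma lex_pattern : lt_at_eq -> o TE TL != OL -> forall k (u v : 'I_k -> P), exists g,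
  [/\ pol2 R g, rows_injective g u v & forall l l',
    rows_lt g u v l l' <-> strict le (u l) (u l') /\ (strict le (v l) (v l') \/ v l = v l')].
Proof.
move=> eq nEL k u v; have [g [gP gI gE]] := embedding_pattern u v.
exists g; split=> // l l'; rewrite gE /cmp_ok eq; split.
- case=> oOL [vv|[_ vl]] [uu|[_ ul]]; try by split=> //; left.
  + by move: nEL; rewrite -oOL (proj2 (typ_TE _ _) ul) (proj2 (typ_TL _ _) vv) eqxx.
  + by split=> //; right.
  + by move: oOL; rewrite (proj2 (typ_TE _ _) ul) (proj2 (typ_TE _ _) vl) out_TE_TE.
- case=> uu [vv|vl]; split; try by [left | right].
  + by rewrite (proj2 (typ_TL _ _) uu) (proj2 (typ_TL _ _) vv) out_TL_TL.
  + by rewrite (proj2 (typ_TL _ _) uu) (proj2 (typ_TE _ _) vl); apply/eqP.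
Qed.

(* Feeding the lexicographic pattern into itself, [(x, y) |-> g2 x (g1 y x)] gives [<] on both
   coordinates. *)
Lemma pol2_emb_lt_of_lt_at_eq e : emb_lt le e -> lt_at_eq -> o TE TL != OL -> pol2 R e.
Proof.
move=> eE eq nEL; apply: emb_lt_pol2 => // k u v.
have [g1 [g1P g1I g1E]] := lex_pattern eq nEL v u.
have [g2 [g2P g2I g2E]] := lex_pattern eq nEL u (fun l => g1 (v l) (u l)).
exists (fun x y => g2 x (g1 y x)); split.
- exact: pol2_comp g2P (pol2_aut_fst aut_id) (pol2_swap g1P).
- by move=> l l' /g2I[ul /g1I[]].
- move=> l l'; rewrite [rows_lt _ _ _ _ _](g2E l l') -/(rows_lt g1 v u l l') g1E; split.
  + case=> uu [[vv _]|w]; first by [].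
    by have [_ ul] := g1I _ _ w; case: uu.
  + by case=> uu vv; split=> //; left; split=> //; left.
Qed.

Lemma embedding_table_pol2 e_lt e_le : emb_lt le e_lt -> emb_le le e_le ->
  pol2 R e_lt \/ pol2 R e_le.
Proof.
move=> ltE leE; have [eq|neq] := boolP lt_at_eq.
  have [EL|nEL] := eqVneq (o TE TL) OL.
    by right; apply: pol2_emb_le_of_lt_at_eq.
  by left; apply: pol2_emb_lt_of_lt_at_eq.
by left; apply: pol2_emb_lt_of_not_lt_at_eq.
Qed.
End EmbeddingTable.
End Canonical.

Lemma canonical_pol2_trichotomy f e_lt e_le : canonical2 le prec f -> pol2 R f ->
  emb_lt le e_lt -> emb_le le e_le -> dominated le f \/ pol2 R e_lt \/ pol2 R e_le.
Proof.
move=> fcan fpol ltE leE.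
have gcan : canonical2 le prec (fun x y => f y x).
  by move=> s s0 a1 a2 a1A a2A d1 d2; have [b [bA bE]] := fcan s s0 a2 a1 a2A a1A d2 d1; exists b.
have gpol := pol2_swap fpol.
case/or4P: (out_good fcan fpol) => [dom|dom|emb|emb].
- by left; left; apply: dominated_first_of_table.
- by left; right; apply: (dominated_first_of_table gcan dom).
- by right; apply: (embedding_table_pol2 fcan fpol).
- by right; apply: (embedding_table_pol2 gcan gpol emb).
Qed.
End Polymorphisms.
End RandomPoset.

Theorem theorem36 (P : Type) (le prec : P -> P -> Prop)
  (I : Type) (ar : I -> nat) (R : forall i : I, ('I_(ar i) -> P) -> Prop)
  (e_lt e_le f : P -> P -> P) :
  random_poset le ->
  random_poset_linext le prec ->
  (forall i, fo_definable le (R i)) ->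
  pp_definable R (binrel (strict le)) ->
  pp_definable R (binrel (incomp le)) ->
  emb_lt le e_lt ->
  emb_le le e_le ->
  pol2 R f ->
  canonical2 le prec f ->
  dominated le f \/ pol2 R e_lt \/ pol2 R e_le.
Proof.
move=> HP HL HR Hlt Hinc ltE leE fpol fcan.
exact: (canonical_pol2_trichotomy HP HL HR Hlt Hinc fcan fpol ltE leE).
Qed.
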